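(* Let $G$ be a connected graph on $n\ge 12$ vertices with $\gamma(G)\neq 2$. Then the parameters $dv(G,k_1,k_2,k_3)$ for all nonnegative integers $k_1,k_2,k_3$ with $0\le k_1+k_2+k_3\le n-3$, and $dv(G,k_1,k,k)$ for all nonnegative integers $k_1,k$ with $0\le k_1+2k\le n-3$, are reconstructible; that is, for every graph $H$ with $\mathscr{D}(H)=\mathscr{D}(G)$ these parameters take the same values on $H$ as on $G$.
   Context: All graphs are finite, simple and undirected; $\gamma(G)$ is the domination number. For a vertex $v$, the card $G-v$ is the unlabeled graph obtained by deleting $v$; the deck $\mathscr{D}(G)$ is the multiset of all cards. For nonnegative integers $k_1,k_2,k_3$, $dv(G,k_1,k_2,k_3)$ denotes the number of pairs of non-adjacent vertices $x$ and $y$ in $G$ such that exactly $k_1$ vertices are adjacent to both $x$ and $y$, exactly $k_2$ vertices are adjacent to $x$ but not to $y$, and exactly $k_3$ vertices are adjacent to $y$ but not to $x$. *)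

From mathcomp Require Import all_boot.
Set Implicit Arguments. Unset Strict Implicit. Unset Printing Implicit Defensive.

Definition simple_graph (n : nat) (g : rel 'I_n) : Prop :=
  irreflexive g /\ symmetric g.

Definition connected_graph (n : nat) (g : rel 'I_n) : Prop :=
  forall x y : 'I_n, connect g x y.

Definition dominating (n : nat) (g : rel 'I_n) (D : {set 'I_n}) : bool :=
  [forall v, (v \in D) || [exists u in D, g u v]].

(* domination number: minimum size of a dominating set (setT dominates, so
   the default n is attained). *)
Definition domination_number (n : nat) (g : rel 'I_n) : nat :=
  \big[minn/n]_(D : {set 'I_n} | dominating g D) #|D|.

(* The card G - v, viewed as the induced graph on the vertices other than v. *)
Definition card_vertices (n : nat) (v : 'I_n) := {x : 'I_n | x != v}.

Definition cards_iso (n : nat) (g h : rel 'I_n) (v w : 'I_n) : Prop :=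
  exists f : card_vertices v -> card_vertices w,
    bijective f /\
    forall a b : card_vertices v, g (val a) (val b) = h (val (f a)) (val (f b)).

(* Equal decks: the multisets of unlabeled cards coincide, i.e. there is a
   bijection of the vertices matching each card with an isomorphic one. *)
Definition same_deck (n : nat) (g h : rel 'I_n) : Prop :=
  exists s : 'I_n -> 'I_n, bijective s /\ forall v, cards_iso g h v (s v).

Definition dv_pair (n : nat) (g : rel 'I_n) (k1 k2 k3 : nat) (x y : 'I_n) : bool :=
  [&& #|[set z | g x z && g y z]| == k1,
      #|[set z | g x z && ~~ g y z]| == k2 &
      #|[set z | g y z && ~~ g x z]| == k3].

Definition dv (n : nat) (g : rel 'I_n) (k1 k2 k3 : nat) : nat :=
  #|[set P : {set 'I_n} | [exists x, exists y,
        [&& P == [set x; y], x != y, ~~ g x y &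
            dv_pair g k1 k2 k3 x y || dv_pair g k1 k3 k2 x y]]]|.

From HB Require Import structures.
From mathcomp Require Import all_boot zify.
Set Implicit Arguments. Unset Strict Implicit. Unset Printing Implicit Defensive.

(* A non-adjacent ordered pair (x, y) has a profile (k1, k2, k3): the numbers of
   common neighbours, of neighbours of x only and of neighbours of y only; dv
   counts pairs by profile.  Deleting a vertex v outside {x, y} lowers one entry
   of the profile by one if v is adjacent to x or y, and nothing otherwise.
   Summing over the deck gives Kelly-type identities expressing the deck sum of
   the counts N(q) through N(q + e1), N(q + e2), N(q + e3) and (n - 2 - |q|) N(q),
   so N(q) is reconstructible by downward induction on |q| once the top level
   |q| = n - 2, the non-adjacent dominating pairs, is known for both graphs.
   If G has a universal vertex u, so does H (vertex degrees are reconstructible)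
   and every count is read off the card G - u instead.  Otherwise gamma(G) <> 2
   means G has no dominating pair; H has none either, since the counts by |q|
   alone satisfy the same kind of identity and are determined by upward
   induction from |q| = 0, which is empty when no vertex is isolated. *)

Lemma sum_mem_card (T : finType) (A : {set T}) : \sum_x (x \in A : nat) = #|A|.
Proof. by rewrite -sum1_card [RHS]big_mkcond; apply: eq_bigr => x _; case: (x \in A). Qed.

Lemma setId_imset (T U : finType) (e : T -> U) (W : {set T}) (P : pred U) :
  [set z in e @: W | P z] = e @: [set z in W | P (e z)].
Proof.
apply/setP=> z; rewrite !inE; apply/andP/imsetP.
- by case=> /imsetP [a aW ->] Pa; exists a; rewrite // inE aW.
- by case=> a; rewrite inE => /andP [aW Pa] ->; rewrite imset_f.
Qed.

Lemma imsetT_bij (T U : finType) (f : T -> U) : bijective f -> f @: setT = setT.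
Proof. by case=> f' fK f'K; rewrite (can2_imset_pre _ fK f'K) preimsetT. Qed.

Section Profiles.
Variables (T : finType) (r : rel T).

Definition common_nbrs x y : {set T} := [set z | r x z && r y z].
Definition private_nbrs x y : {set T} := [set z | r x z && ~~ r y z].
Definition nonnbrs x : {set T} := [set z | (z != x) && ~~ r x z].

Definition profile (W : {set T}) x y :=
  (#|W :&: common_nbrs x y|, #|W :&: private_nbrs x y|, #|W :&: private_nbrs y x|).

Definition nonedge (W : {set T}) (u : T * T) :=
  [&& u.1 \in W, u.2 \in W, u.1 != u.2 & ~~ r u.1 u.2].

Definition nonedge_count (W : {set T}) (phi : pred (nat * nat * nat)) :=
  #|[set u | nonedge W u && phi (profile W u.1 u.2)]|.

Lemma nonedge_countE W phi :
  nonedge_count W phi = \sum_u (nonedge W u && phi (profile W u.1 u.2)).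
Proof. by rewrite /nonedge_count -sum_mem_card; apply: eq_bigr => u _; rewrite inE. Qed.

Lemma nonedge_count_ext W (phi psi : pred (nat * nat * nat)) :
  phi =1 psi -> nonedge_count W phi = nonedge_count W psi.
Proof. by move=> E; apply: eq_card => u; rewrite !inE E. Qed.

Lemma nonedge_count_le W (phi psi : pred (nat * nat * nat)) :
  subpred phi psi -> nonedge_count W phi <= nonedge_count W psi.
Proof.
move=> sub; apply/subset_leq_card/subsetP => u; rewrite !inE.
by case/andP=> -> /sub.
Qed.

Lemma nonedge_countU W (phi psi : pred (nat * nat * nat)) :
  (forall q, ~~ (phi q && psi q)) ->
  nonedge_count W (predU phi psi) = nonedge_count W phi + nonedge_count W psi.
Proof.
move=> disj; rewrite !nonedge_countE -big_split; apply: eq_bigr => u _ /=.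
move: (disj (profile W u.1 u.2)).
by case: nonedge; case: (phi _); case: (psi _).
Qed.

End Profiles.

Section Isomorphism.
Variables (T U : finType) (e : T -> U) (r : rel T) (r' : rel U).
Hypotheses (e_inj : injective e) (e_hom : forall a b, r' (e a) (e b) = r a b).

Lemma profile_iso (W : {set T}) x y : profile r' (e @: W) (e x) (e y) = profile r W x y.
Proof.
by rewrite /profile -!setIdE !setId_imset !card_imset //; congr (_, _, _);
  apply: eq_card => z; rewrite !inE !e_hom.
Qed.

Lemma nonedge_count_iso (W : {set T}) phi :
  nonedge_count r' (e @: W) phi = nonedge_count r W phi.
Proof.
rewrite /nonedge_count.
have -> : [set u | nonedge r' (e @: W) u && phi (profile r' (e @: W) u.1 u.2)] =
    (fun u => (e u.1, e u.2)) @: [set u | nonedge r W u && phi (profile r W u.1 u.2)].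
  apply/setP => [[a' b']]; rewrite !inE /nonedge /=; apply/idP/imsetP.
  - case/andP => /and4P [/imsetP [a aW ->] /imsetP [b bW ->] neq nadj] ph.
    exists (a, b) => //; rewrite inE /nonedge /= aW bW -profile_iso ph.
    by rewrite (inj_eq e_inj) in neq; rewrite neq -e_hom nadj.
  - case=> [[a b]]; rewrite inE /nonedge /= => /andP [/and4P [aW bW neq nadj] ph] [-> ->].
    by rewrite !imset_f // (inj_eq e_inj) neq e_hom nadj profile_iso ph.
by rewrite card_imset // => [[a b] [c d]] /= [/e_inj -> /e_inj ->].
Qed.

End Isomorphism.

Lemma profile_setT (T : finType) (r : rel T) x y :
  profile r setT x y =
    (#|common_nbrs r x y|, #|private_nbrs r x y|, #|private_nbrs r y x|).
Proof. by rewrite /profile !setTI. Qed.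

Lemma profile_setC1 (T : finType) (r : rel T) v x y :
  profile r [set~ v] x y =
    (#|common_nbrs r x y :\ v|, #|private_nbrs r x y :\ v|, #|private_nbrs r y x :\ v|).
Proof. by rewrite /profile !(setIC [set~ v]) -!setDE. Qed.

Definition card_rel n (g : rel 'I_n) (v : 'I_n) : rel (card_vertices v) :=
  fun a b => g (val a) (val b).
Arguments card_rel {n} g v.

Lemma val_card_vertices n (v : 'I_n) : val @: [set: card_vertices v] = [set~ v].
Proof.
apply/setP => z; rewrite !inE; apply/imsetP/idP => [[a _ ->]|zv].
  exact: (valP a).
by exists (exist _ z zv).
Qed.

Lemma nonedge_count_card n (g : rel 'I_n) v phi :
  nonedge_count g [set~ v] phi = nonedge_count (card_rel g v) setT phi.
Proof.
by rewrite -val_card_vertices (nonedge_count_iso val_inj (r := card_rel g v)).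
Qed.

Lemma cards_iso_nonedge_count n (g h : rel 'I_n) v w phi :
  cards_iso g h v w -> nonedge_count g [set~ v] phi = nonedge_count h [set~ w] phi.
Proof.
case=> f [f_bij f_hom]; rewrite !nonedge_count_card -(imsetT_bij f_bij).
rewrite (nonedge_count_iso (bij_inj f_bij) (r := card_rel g v)) // => a b.
by rewrite /card_rel f_hom.
Qed.

Lemma same_deck_nonedge_count n (g h : rel 'I_n) : same_deck g h ->
  exists2 s : 'I_n -> 'I_n, bijective s &
    forall v phi, nonedge_count g [set~ v] phi = nonedge_count h [set~ s v] phi.
Proof.
by case=> s [s_bij s_iso]; exists s => // v phi; apply: cards_iso_nonedge_count.
Qed.

Lemma sum_cardsD1 (T : finType) (X C A B : {set T}) (F : nat -> nat -> nat -> nat) :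
  [disjoint X & C :|: A :|: B] -> [disjoint C & A :|: B] -> [disjoint A & B] ->
  \sum_(v in ~: X) F #|C :\ v| #|A :\ v| #|B :\ v| =
    #|C| * F #|C|.-1 #|A| #|B| + #|A| * F #|C| #|A|.-1 #|B|
    + #|B| * F #|C| #|A| #|B|.-1 + #|~: (X :|: C :|: A :|: B)| * F #|C| #|A| #|B|.
Proof.
move=> dX dC dAB; set R := ~: (X :|: C :|: A :|: B).
have cardD1 (Y : {set T}) v : #|Y :\ v| = #|Y| - (v \in Y) by rewrite (cardsD1 v Y) addKn.
have subX : C :|: A :|: B \subset ~: X by rewrite -disjoints_subset disjoint_sym.
have sum_mem (Y : {set T}) : Y \subset ~: X -> \sum_(v in ~: X) (v \in Y : nat) = #|Y|.
  move=> sY; rewrite -sum_mem_card [RHS](bigID (mem (~: X))) /=.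
  rewrite [X in _ + X]big1 ?addn0 // => v /negbTE vX.
  by apply/eqP; rewrite eqb0; apply: contraFN vX => /(subsetP sY).
have split v : v \in ~: X -> F #|C :\ v| #|A :\ v| #|B :\ v| =
    (v \in C) * F #|C|.-1 #|A| #|B| + (v \in A) * F #|C| #|A|.-1 #|B|
    + (v \in B) * F #|C| #|A| #|B|.-1 + (v \in R) * F #|C| #|A| #|B|.
  rewrite /R !cardD1 !inE => /negbTE ->.
  case vC: (v \in C).
    move: (disjointFr dC vC); rewrite inE => /norP [/negbTE -> /negbTE ->].
    by rewrite /= subn1 !subn0 mul1n !mul0n !addn0.
  case vA: (v \in A).
    by rewrite (disjointFr dAB vA) /= subn1 !subn0 mul1n !mul0n add0n !addn0.
  by case: (v \in B); rewrite /= ?subn1 !subn0 ?mul1n !mul0n ?add0n ?addn0.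
rewrite (eq_bigr _ split) !big_split /= -!big_distrl /= !sum_mem //.
- by rewrite setCS -!setUA subsetUl.
- exact: subset_trans (subsetUr _ _) subX.
- exact: subset_trans (subset_trans (subsetUr C A) (subsetUl _ B)) subX.
- exact: subset_trans (subset_trans (subsetUl C A) (subsetUl _ B)) subX.
Qed.

Definition psize (q : nat * nat * nat) := let: (c, a, b) := q in c + a + b.

(* Deleting v outside {x, y} from a non-adjacent pair of profile (c, a, b)
   lowers c, a or b when v is a common, x-only or y-only neighbour, and changes
   nothing for the n - 2 - (c + a + b) remaining vertices (card_undominated). *)
Definition deletion_weight n (phi : pred (nat * nat * nat)) (q : nat * nat * nat) :=
  let: (c, a, b) := q in
  c * phi (c.-1, a, b) + a * phi (c, a.-1, b) + b * phi (c, a, b.-1)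
  + (n - 2 - (c + a + b)) * phi (c, a, b).

Lemma deletion_weight_pred1 n (q1 q2 q3 : nat) p :
  deletion_weight n (pred1 (q1, q2, q3)) p =
    q1.+1 * (p == (q1.+1, q2, q3)) + q2.+1 * (p == (q1, q2.+1, q3))
    + q3.+1 * (p == (q1, q2, q3.+1)) + (n - 2 - (q1 + q2 + q3)) * (p == (q1, q2, q3)).
Proof.
case: p => [[c a] b]; rewrite /deletion_weight /= !xpair_eqE.
congr (_ + _ + _ + _).
- case: c => [|c]; rewrite ?mul0n ?muln0 //= eqSS.
  by case: (c =P q1) => [->|]; rewrite ?muln0.
- case: a => [|a]; rewrite ?andbF ?mul0n ?muln0 //= eqSS.
  by case: (a =P q2) => [->|]; rewrite ?andbF ?muln0.
- case: b => [|b]; rewrite ?andbF ?mul0n ?muln0 //= eqSS.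
  by case: (b =P q3) => [->|]; rewrite ?andbF ?muln0.
- by case: eqP => [->|]; case: eqP => [->|]; case: eqP => [->|]; rewrite ?andbF ?muln0.
Qed.

Lemma deletion_weight_psize n t p :
  deletion_weight n (fun q => psize q == t) p =
    t.+1 * (psize p == t.+1) + (n - 2 - t) * (psize p == t).
Proof.
case: p => [[c a] b]; rewrite /deletion_weight /=.
have -> : c * (c.-1 + a + b == t) = c * (c + a + b == t.+1).
  by case: c => [|c] //=; rewrite !addSn eqSS.
have -> : a * (c + a.-1 + b == t) = a * (c + a + b == t.+1).
  by case: a => [|a] //=; rewrite addnS addSn eqSS.
have -> : b * (c + a + b.-1 == t) = b * (c + a + b == t.+1).
  by case: b => [|b] //=; rewrite addnS eqSS.
rewrite -!mulnDl; case: eqP => [->|_]; case: eqP => [->|_]; rewrite ?muln0 //; lia.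
Qed.

Section NonedgeDeletion.
Variables (n : nat) (g : rel 'I_n).

Lemma sum_nonedge_count_deleted phi :
  \sum_v nonedge_count g [set~ v] phi =
  \sum_u nonedge g setT u * \sum_(v in ~: [set u.1; u.2]) phi (profile g [set~ v] u.1 u.2).
Proof.
under eq_bigr do rewrite nonedge_countE.
rewrite exchange_big; apply: eq_bigr => [[x y]] _ /=.
rewrite big_distrr [RHS]big_mkcond /=; apply: eq_bigr => v _.
rewrite /nonedge !inE /= ![_ == v]eq_sym.
by rewrite andbA -negb_or; case: (_ || _); rewrite /= ?mulnb ?andbA.
Qed.

Lemma sum_nonedge_count_deleted_predT :
  \sum_v nonedge_count g [set~ v] predT = (n - 2) * nonedge_count g setT predT.
Proof.
rewrite sum_nonedge_count_deleted nonedge_countE big_distrr /=.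
apply: eq_bigr => [[x y]] _ /=; rewrite sum1_card andbT.
case: (boolP (nonedge g setT (x, y))) => [/and4P [_ _ xy _]|_]; last by rewrite !muln0.
by move: (cardsC [set x; y]); rewrite cards2 xy card_ord; lia.
Qed.

Hypothesis g_simple : simple_graph g.

Lemma nonedge_nbrs_disjoint x y : x != y -> ~~ g x y ->
  [/\ [disjoint [set x; y] &
        common_nbrs g x y :|: private_nbrs g x y :|: private_nbrs g y x],
      [disjoint common_nbrs g x y & private_nbrs g x y :|: private_nbrs g y x]
    & [disjoint private_nbrs g x y & private_nbrs g y x]].
Proof.
case: g_simple => irr sym xy nxy.
split; rewrite disjoints_subset; apply/subsetP => z; rewrite !inE //.
- by case/orP => /eqP ->; rewrite irr ?(sym y x) (negbTE nxy) ?andbF.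
- by case/andP => -> ->.
- by case/andP => -> _; rewrite andbF.
Qed.

Lemma card_undominated x y : x != y -> ~~ g x y ->
  #|~: ([set x; y] :|: common_nbrs g x y :|: private_nbrs g x y :|: private_nbrs g y x)|
    = n - 2 - psize (profile g setT x y).
Proof.
move=> xy nxy; have [dX dC dAB] := nonedge_nbrs_disjoint xy nxy.
move: (sum_cardsD1 (fun _ _ _ => 1) dX dC dAB) (cardsC [set x; y]).
by rewrite sum1_card profile_setT cards2 xy card_ord /=; lia.
Qed.

Lemma sum_profile_deleted x y (phi : pred (nat * nat * nat)) :
  x != y -> ~~ g x y ->
  \sum_(v in ~: [set x; y]) phi (profile g [set~ v] x y) =
    deletion_weight n phi (profile g setT x y).
Proof.
move=> xy nxy; have [dX dC dAB] := nonedge_nbrs_disjoint xy nxy.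
under eq_bigr do rewrite profile_setC1.
rewrite (sum_cardsD1 (fun c a b => phi (c, a, b)) dX dC dAB) card_undominated //.
by rewrite profile_setT.
Qed.

Lemma sum_nonedge_count_deleted_weight phi :
  \sum_v nonedge_count g [set~ v] phi =
    \sum_u nonedge g setT u * deletion_weight n phi (profile g setT u.1 u.2).
Proof.
rewrite sum_nonedge_count_deleted; apply: eq_bigr => [[x y]] _ /=.
case: (boolP (nonedge g setT (x, y))) => [/and4P [_ _ xy nxy]|_]; last by rewrite !mul0n.
by rewrite sum_profile_deleted.
Qed.

Lemma sum_nonedge_count_deleted_pred1 (q1 q2 q3 : nat) :
  \sum_v nonedge_count g [set~ v] (pred1 (q1, q2, q3)) =
    q1.+1 * nonedge_count g setT (pred1 (q1.+1, q2, q3))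
    + q2.+1 * nonedge_count g setT (pred1 (q1, q2.+1, q3))
    + q3.+1 * nonedge_count g setT (pred1 (q1, q2, q3.+1))
    + (n - 2 - (q1 + q2 + q3)) * nonedge_count g setT (pred1 (q1, q2, q3)).
Proof.
rewrite sum_nonedge_count_deleted_weight !nonedge_countE !big_distrr -!big_split.
apply: eq_bigr => u _; rewrite deletion_weight_pred1 /=.
by case: nonedge; rewrite ?mul0n ?muln0 //= !mul1n.
Qed.

Lemma sum_nonedge_count_deleted_psize t :
  \sum_v nonedge_count g [set~ v] (fun q => psize q == t) =
    t.+1 * nonedge_count g setT (fun q => psize q == t.+1)
    + (n - 2 - t) * nonedge_count g setT (fun q => psize q == t).
Proof.
rewrite sum_nonedge_count_deleted_weight !nonedge_countE !big_distrr -!big_split.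
apply: eq_bigr => u _; rewrite deletion_weight_psize /=.
by case: nonedge; rewrite ?mul0n ?muln0 //= !mul1n.
Qed.

End NonedgeDeletion.

Section Nonneighbours.
Variables (T : finType) (r : rel T).
Hypotheses (r_irr : irreflexive r) (r_sym : symmetric r).

Lemma nonedge_count_predT_setC1 v :
  nonedge_count r setT predT = nonedge_count r [set~ v] predT + 2 * #|nonnbrs r v|.
Proof.
have split u : (nonedge r setT u && predT (profile r setT u.1 u.2) : nat) =
    (nonedge r [set~ v] u && predT (profile r [set~ v] u.1 u.2))
    + (u \in setX [set v] (nonnbrs r v)) + (u \in setX (nonnbrs r v) [set v]).
  case: u => x y; rewrite /nonedge !inE /= !andbT.
  case: (eqVneq x v) => [->|xv]; case: (eqVneq y v) => [->|yv] //=.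
  - by rewrite addn0.
  - by rewrite xv r_sym andbT.
  - by rewrite andbF /= !addn0.
rewrite !nonedge_countE (eq_bigr _ (fun u _ => split u)) !big_split /=.
by rewrite !sum_mem_card !cardsX !cards1; lia.
Qed.

Lemma has_nbrE x : [exists z, r x z] = (#|nonnbrs r x| < #|T|.-1).
Proof.
have nbr_sub : [set z | r x z] \subset [set~ x].
  by apply/subsetP => z; rewrite !inE; apply: contraTneq => ->; rewrite r_irr.
have -> : nonnbrs r x = [set~ x] :\: [set z | r x z].
  by apply/setP => z; rewrite !inE andbC.
have -> : [exists z, r x z] = (0 < #|[set z | r x z]|).
  by apply/existsP/card_gt0P => -[z rxz]; exists z; rewrite ?inE in rxz *.
have := subset_leq_card nbr_sub; rewrite cardsD (setIidPr nbr_sub) cardsC1.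
by move=> nbr_le; apply/idP/idP; lia.
Qed.

Lemma nonedge_count_universal u phi : nonnbrs r u = set0 ->
  nonedge_count r setT phi = nonedge_count r [set~ u] (fun q => phi (q.1.1.+1, q.1.2, q.2)).
Proof.
move=> u_univ; have univ z : z != u -> r u z.
  by move=> zu; move/setP/(_ z): u_univ; rewrite !inE zu => /negbFE.
apply: eq_card => [[x y]]; rewrite !inE /nonedge /= !inE.
case xy: (x != y); rewrite ?andbF //=; case rxy: (r x y); rewrite ?andbF //=.
have xu : x != u by apply: contraFneq rxy => xu; rewrite xu univ // -xu eq_sym xy.
have yu : y != u by apply: contraFneq rxy => yu; rewrite r_sym yu univ // -yu xy.
rewrite xu yu profile_setT /= !(setIC [set~ u]) -!setDE; congr phi.
have uC : u \in common_nbrs r x y by rewrite inE (r_sym x) (r_sym y) !univ.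
have uA : u \notin private_nbrs r x y by rewrite inE (r_sym y) univ ?andbF.
have uB : u \notin private_nbrs r y x by rewrite inE (r_sym x) univ ?andbF.
rewrite [#|common_nbrs r x y|](cardsD1 u) [#|private_nbrs r x y|](cardsD1 u).
by rewrite [#|private_nbrs r y x|](cardsD1 u) uC (negbTE uA) (negbTE uB).
Qed.

Lemma nonedge_count_psize0 : (forall x, exists z, r x z) ->
  nonedge_count r setT (fun q => psize q == 0) = 0.
Proof.
move=> has_nbr; rewrite nonedge_countE big1 // => [[x y]] _ /=.
have [z rxz] := has_nbr x.
have x_nbrs : 0 < #|common_nbrs r x y| + #|private_nbrs r x y|.
  rewrite addn_gt0; apply/orP; case: (boolP (r y z)) => ryz; [left | right];
    by apply/card_gt0P; exists z; rewrite inE rxz.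
rewrite /= !setTI; case: eqP; rewrite ?andbF //; lia.
Qed.

End Nonneighbours.

(* Lets [bigD1] split the minimum defining [domination_number]. *)
HB.instance Definition _ := SemiGroup.isComLaw.Build nat minn minnA minnC.

Section Domination.
Variables (n : nat) (g : rel 'I_n).

Lemma domination_number_le D : dominating g D -> domination_number g <= #|D|.
Proof. by move=> D_dom; rewrite /domination_number (bigD1 D) //= geq_minl. Qed.

Lemma two_le_domination_number : 1 < n -> (forall u, nonnbrs g u != set0) ->
  1 < domination_number g.
Proof.
move=> n_gt1 no_univ; apply: (big_ind (fun m => 1 < m)) => // [a b a_gt1 b_gt1|D D_dom].
  by rewrite leq_min a_gt1 b_gt1.
rewrite ltnNge; apply/negP => D_le1; case: (posnP #|D|) => [/cards0_eq D0|D_gt0].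
  move/forallP/(_ (Ordinal (ltnW n_gt1))): D_dom; rewrite D0 inE /=.
  by case/existsP => w; rewrite inE.
have /cards1P [u Du] : #|D| == 1 by lia.
have /set0Pn [z] := no_univ u; rewrite inE => /andP [zu nuz].
move/forallP/(_ z): D_dom; rewrite Du !inE (negbTE zu) /=.
by case/existsP => w; rewrite !inE => /andP [/eqP -> uz]; rewrite uz in nuz.
Qed.

Hypothesis g_simple : simple_graph g.

Lemma nonedge_count_psize_top : (forall u, nonnbrs g u != set0) ->
  domination_number g <> 2 -> nonedge_count g setT (fun q => psize q == n - 2) = 0.
Proof.
move=> no_univ g_dom; rewrite nonedge_countE big1 // => [[x y]] _ /=.
case: (boolP (nonedge g setT (x, y))) => [/and4P [_ _ xy nxy]|//].
apply/eqP; rewrite eqb0; apply/eqP => top.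
have := card_undominated g_simple xy nxy; rewrite /= top subnn => /cards0_eq undom.
have xy_dom : dominating g [set x; y].
  apply/forallP => v; move/setP/(_ v): undom; rewrite !inE => /negbFE.
  case: (v == x) => //=; case: (v == y) => //= v_nbr; apply/existsP.
  case: (boolP (g x v)) => gxv; first by exists x; rewrite !inE eqxx gxv.
  by exists y; move: v_nbr; rewrite !inE eqxx (negbTE gxv) orbT /= andbT.
have n_gt1 : 1 < n by have := max_card [set x; y]; rewrite cards2 xy card_ord.
have := domination_number_le xy_dom; rewrite cards2 xy.
by have := two_le_domination_number n_gt1 no_univ; lia.
Qed.

End Domination.

Lemma connected_has_nbr n (g : rel 'I_n) : 1 < n -> connected_graph g ->
  forall v, exists z, g v z.
Proof.
move=> n_gt1 g_conn v.
have /card_gt0P [z] : 0 < #|[set~ v]| by rewrite cardsC1 card_ord; lia.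
rewrite !inE => zv; case/connectP: (g_conn v z) => [[|w p]] /=.
  by move=> _ zv'; rewrite zv' eqxx in zv.
by case/andP => gvw _ _; exists w.
Qed.

Lemma eq_set2 (T : finType) (x y a b : T) : x != y ->
  ([set a; b] == [set x; y]) = (a == x) && (b == y) || (a == y) && (b == x).
Proof.
move=> xy; apply/eqP/idP => [E|/orP [] /andP [/eqP -> /eqP ->] //]; last by rewrite setUC.
have := set21 x y; have := set22 x y; rewrite -E !inE => yab xab.
have := set21 a b; have := set22 a b; rewrite E !inE => bxy axy.
case/orP: axy => /eqP ax; case/orP: bxy => /eqP bx; subst a b; rewrite ?eqxx ?orbT //.
- by move: yab; rewrite orbb eq_sym (negbTE xy).
- by move: xab; rewrite orbb (negbTE xy).
Qed.

Lemma card_set2_imset (T : finType) (S : {set T * T}) :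
  (forall x y, ((x, y) \in S) = ((y, x) \in S)) -> (forall u, u \in S -> u.1 != u.2) ->
  #|[set [set u.1; u.2] | u in S]| * 2 = #|S|.
Proof.
move=> S_sym S_offdiag.
rewrite -[RHS]sum1_card (partition_big_imset (fun u => [set u.1; u.2])) -sum_nat_const.
apply: eq_bigr => _ /imsetP [[x y] xyS ->] /=.
have xy := S_offdiag _ xyS.
rewrite sum1dep_card.
have -> : [set u in S | [set u.1; u.2] == [set x; y]] = [set (x, y); (y, x)].
  apply/setP => [[a b]]; rewrite !inE /= eq_set2 // !xpair_eqE.
  apply/andP/idP => [[] //|ab]; split => //.
  by case/orP: ab => /andP [/eqP -> /eqP ->]; rewrite // -S_sym.
by rewrite cards2 xpair_eqE negb_and xy.
Qed.

Lemma dv_pairE n (g : rel 'I_n) k1 k2 k3 x y :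
  dv_pair g k1 k2 k3 x y = (profile g setT x y == (k1, k2, k3)).
Proof. by rewrite profile_setT !xpair_eqE -andbA. Qed.

Lemma dv_nonedge_count n (g : rel 'I_n) k1 k2 k3 : symmetric g ->
  dv g k1 k2 k3 * 2 =
    nonedge_count g setT (predU (pred1 (k1, k2, k3)) (pred1 (k1, k3, k2))).
Proof.
move=> g_sym; rewrite /nonedge_count -card_set2_imset.
- congr (_ * 2); apply: eq_card => P; rewrite !inE.
  apply/existsP/imsetP => [[x /existsP [y /and4P [/eqP -> xy nxy]]]|[[x y]]].
    by rewrite !dv_pairE => dv_xy; exists (x, y); rewrite // inE /nonedge !inE xy nxy.
  rewrite inE /nonedge !inE /= => /andP [/andP [xy nxy] dv_xy] ->.
  by exists x; apply/existsP; exists y; rewrite eqxx xy nxy !dv_pairE.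
- move=> x y; rewrite !inE /nonedge /= !inE eq_sym (g_sym x y) !profile_setT.
  have -> : common_nbrs g y x = common_nbrs g x y by apply/setP => z; rewrite !inE andbC.
  rewrite /= !xpair_eqE; case: (_ != _); case: (g _ _) => //=.
  by case: (_ == k1); case: (_ == k2); case: (_ == k3); case: (_ == k2); case: (_ == k3).
- by move=> u; rewrite inE => /andP [/and4P [_ _ xy _] _].
Qed.

Lemma dv_eq_of_nonedge_counts n (g h : rel 'I_n) m k1 k2 k3 :
  symmetric g -> symmetric h ->
  (forall q, psize q <= m ->
     nonedge_count h setT (pred1 q) = nonedge_count g setT (pred1 q)) ->
  k1 + k2 + k3 <= m -> dv h k1 k2 k3 = dv g k1 k2 k3.
Proof.
move=> g_sym h_sym count_eq k_le.
apply/eqP; rewrite -(eqn_pmul2r (ltn0Sn 1)) !dv_nonedge_count //; apply/eqP.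
case: (eqVneq k2 k3) k_le => [<-|k23] k_le.
  have dup : predU (pred1 (k1, k2, k2)) (pred1 (k1, k2, k2)) =1 pred1 (k1, k2, k2).
    by move=> q; apply: orbb.
  by rewrite !(nonedge_count_ext _ _ dup) count_eq.
have disj q : ~~ ((q == (k1, k2, k3)) && (q == (k1, k3, k2))).
  by apply/negP => /andP [/eqP -> /eqP [k23']]; rewrite k23' eqxx in k23.
by rewrite !nonedge_countU // !count_eq //= addnAC.
Qed.

Section Reconstruction.
Variables (n : nat) (g h : rel 'I_n) (s : 'I_n -> 'I_n).
Hypotheses (g_simple : simple_graph g) (h_simple : simple_graph h) (s_bij : bijective s).
Hypothesis s_cards :
  forall v phi, nonedge_count g [set~ v] phi = nonedge_count h [set~ s v] phi.

Lemma sum_nonedge_count_deck phi :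
  \sum_v nonedge_count g [set~ v] phi = \sum_v nonedge_count h [set~ v] phi.
Proof.
by rewrite [RHS](reindex_inj (bij_inj s_bij)); apply: eq_bigr => v _; apply: s_cards.
Qed.

Hypothesis n_gt2 : 2 < n.

Lemma card_nonnbrs_deck v : #|nonnbrs h (s v)| = #|nonnbrs g v|.
Proof.
have [[_ g_sym] [_ h_sym]] := (g_simple, h_simple).
have count_eq : nonedge_count g setT predT = nonedge_count h setT predT.
  apply/eqP; rewrite -(eqn_pmul2l (_ : 0 < n - 2)); last by lia.
  by rewrite -!sum_nonedge_count_deleted_predT sum_nonedge_count_deck.
move: (nonedge_count_predT_setC1 g_sym v) (nonedge_count_predT_setC1 h_sym (s v)).
by rewrite s_cards count_eq; lia.
Qed.

Lemma nonedge_count_deck_universal u phi : nonnbrs g u = set0 ->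
  nonedge_count h setT phi = nonedge_count g setT phi.
Proof.
move=> g_univ; have h_univ : nonnbrs h (s u) = set0.
  by apply/cards0_eq; rewrite card_nonnbrs_deck g_univ cards0.
have [[_ g_sym] [_ h_sym]] := (g_simple, h_simple).
rewrite (nonedge_count_universal h_sym _ h_univ).
by rewrite (nonedge_count_universal g_sym _ g_univ).
Qed.

Lemma nonedge_count_deck_psize t : (forall v, exists z, g v z) ->
  nonedge_count h setT (fun q => psize q == t) =
    nonedge_count g setT (fun q => psize q == t).
Proof.
move=> g_nbr; have h_nbr w : exists z, h w z.
  have [[g_irr _] [h_irr _]] := (g_simple, h_simple).
  case: s_bij => s' sK s'K; rewrite -(s'K w); apply/existsP.
  by rewrite has_nbrE // card_nonnbrs_deck -has_nbrE //; apply/existsP.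
elim: t => [|t IH]; first by rewrite !nonedge_count_psize0.
have := sum_nonedge_count_deck (fun q => psize q == t).
rewrite !sum_nonedge_count_deleted_psize // IH => /eqP.
by rewrite eqn_add2r eqn_pmul2l // => /eqP.
Qed.

Lemma nonedge_count_deck_pred1 :
  nonedge_count g setT (fun q => psize q == n - 2) = 0 ->
  nonedge_count h setT (fun q => psize q == n - 2) = 0 ->
  forall q, psize q <= n - 2 ->
    nonedge_count h setT (pred1 q) = nonedge_count g setT (pred1 q).
Proof.
move=> g_top h_top q q_le.
suff count_eq m q1 q2 q3 : q1 + q2 + q3 + m = n - 2 ->
    nonedge_count h setT (pred1 (q1, q2, q3)) = nonedge_count g setT (pred1 (q1, q2, q3)).
  case: q q_le => [[q1 q2 q3]] /= q_le.
  by apply: (count_eq (n - 2 - (q1 + q2 + q3))); lia.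
elim: m q1 q2 q3 => [|m IH] q1 q2 q3 q_eq.
  have top_vanish r : nonedge_count r setT (fun q => psize q == n - 2) = 0 ->
      nonedge_count r setT (pred1 (q1, q2, q3)) = 0.
    move=> top; apply/eqP; rewrite -leqn0 -top; apply: nonedge_count_le => p /eqP ->.
    by rewrite /= -q_eq addn0.
  by rewrite !top_vanish.
have := sum_nonedge_count_deck (pred1 (q1, q2, q3)).
rewrite !sum_nonedge_count_deleted_pred1 //.
rewrite (IH q1.+1 q2 q3) ?(IH q1 q2.+1 q3) ?(IH q1 q2 q3.+1); try lia.
by move/eqP; rewrite eqn_add2l eqn_pmul2l; [move/eqP | lia].
Qed.

Lemma nonedge_count_deck q : connected_graph g -> domination_number g <> 2 ->
  psize q <= n - 2 -> nonedge_count h setT (pred1 q) = nonedge_count g setT (pred1 q).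
Proof.
move=> g_conn g_dom.
case: (pickP (fun u => nonnbrs g u == set0)) => [u /eqP g_univ _ | no_univ].
  exact: nonedge_count_deck_universal g_univ.
have g_nbr := connected_has_nbr (ltnW n_gt2) g_conn.
have g_top := nonedge_count_psize_top g_simple (fun u => negbT (no_univ u)) g_dom.
by apply: nonedge_count_deck_pred1; rewrite // nonedge_count_deck_psize.
Qed.

End Reconstruction.

Theorem theorem15 (n : nat) (g : rel 'I_n) :
  12 <= n ->
  simple_graph g ->
  connected_graph g ->
  domination_number g <> 2 ->
  forall h : rel 'I_n, simple_graph h -> same_deck g h ->
    (forall k1 k2 k3 : nat, k1 + k2 + k3 <= n - 3 ->
       dv h k1 k2 k3 = dv g k1 k2 k3) /\
    (forall k1 k : nat, k1 + 2 * k <= n - 3 ->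
       dv h k1 k k = dv g k1 k k).
Proof.
move=> n_ge12 g_simple g_conn g_dom h h_simple /same_deck_nonedge_count [s s_bij s_cards].
have n_gt2 : 2 < n by lia.
have count_eq := nonedge_count_deck g_simple h_simple s_bij s_cards n_gt2 g_conn g_dom.
have [[_ g_sym] [_ h_sym]] := (g_simple, h_simple).
have dv_eq k1 k2 k3 : k1 + k2 + k3 <= n - 3 -> dv h k1 k2 k3 = dv g k1 k2 k3.
  by move=> k_le; apply: (dv_eq_of_nonedge_counts g_sym h_sym count_eq); lia.
split=> [//|k1 k k_le]; apply: dv_eq; lia.
Qed.
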